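(* Let $\mathbb{F}_d$ be a field with the discrete topology, let $G$ be an ample Hausdorff groupoid, and let $\sigma\colon G^{(2)} \to \mathbb{F}_d^\times$ be a continuous $2$-cocycle. Let $\Gamma$ be a discrete group with identity $e$, and let $c\colon G \to \Gamma$ be a continuous groupoid homomorphism such that the subgroupoid $G_e := c^{-1}(e)$ is effective. Let $Q$ be a $\Gamma$-graded ring and $\pi\colon A_{\mathbb{F}_d}(G,\sigma) \to Q$ a graded ring homomorphism. Then $\pi$ is injective if and only if $\pi(1_K) \neq 0$ for every nonempty compact open subset $K$ of $G^{(0)}$.
   Context: Groupoids are locally compact Hausdorff topological groupoids; $G$ is ample if it has a basis of compact open bisections; a groupoid $H$ is effective if the interior of $\{\gamma\in H : r(\gamma) = s(\gamma)\}$ equals $H^{(0)}$. A continuous $2$-cocycle is a continuous (locally constant) $\sigma\colon G^{(2)} \to \mathbb{F}_d^\times$ with $\sigma(\alpha,\beta)\sigma(\alpha\beta,\gamma) = \sigma(\alpha,\beta\gamma)\sigma(\beta,\gamma)$ and $\sigma(r(\gamma),\gamma)=1=\sigma(\gamma,s(\gamma))$. $A_{\mathbb{F}_d}(G,\sigma)$ is the algebra of locally constant compactly supported $f\colon G\to\mathbb{F}_d$ with multiplication $(fg)(\gamma) = \sum_{\alpha\beta=\gamma}\sigma(\alpha,\beta)f(\alpha)g(\beta)$. It is $\Gamma$-graded with homogeneous components $A_{\mathbb{F}_d}(G,\sigma)_\gamma = \{f : \{f\neq 0\}\subseteq c^{-1}(\gamma)\}$. A $\Gamma$-graded ring $Q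 = \bigoplus_{\gamma\in\Gamma} Q_\gamma$ has additive subgroups $Q_\gamma$ with $Q_\zeta Q_\eta \subseteq Q_{\zeta\eta}$; a graded homomorphism $\pi$ satisfies $\pi(A_{\mathbb{F}_d}(G,\sigma)_\gamma)\subseteq Q_\gamma$ for all $\gamma$. $1_K$ denotes the indicator function of $K$. *)

From HB Require Import structures.
From mathcomp Require Import all_boot all_order all_algebra.
From mathcomp Require Import boolp classical_sets functions cardinality fsbigop.
From mathcomp Require Import topology.
Set Implicit Arguments. Unset Strict Implicit. Unset Printing Implicit Defensive.
Import Order.TTheory GRing.Theory Num.Theory.
Local Open Scope classical_set_scope.
Local Open Scope ring_scope.

Definition is_group (T : Type) (mul : T -> T -> T) (e : T) (inv : T -> T) : Prop :=
  [/\ forall a b c, mul a (mul b c) = mul (mul a b) c,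
      forall a, mul e a = a /\ mul a e = a &
      forall a, mul (inv a) a = e /\ mul a (inv a) = e].

Definition is_rng (Q : zmodType) (mulQ : Q -> Q -> Q) : Prop :=
  [/\ forall a b c, mulQ a (mulQ b c) = mulQ (mulQ a b) c,
      forall a b c, mulQ a (b + c) = mulQ a b + mulQ a c &
      forall a b c, mulQ (a + b) c = mulQ a c + mulQ b c].

Definition is_graded_rng (Gam : Type) (gmul : Gam -> Gam -> Gam)
    (Q : zmodType) (mulQ : Q -> Q -> Q) (Qg : Gam -> set Q) : Prop :=
  [/\ is_rng mulQ,
      forall g, Qg g 0 /\ (forall x y, Qg g x -> Qg g y -> Qg g (x - y)),
      forall z h x y, Qg z x -> Qg h y -> Qg (gmul z h) (mulQ x y),
      forall q : Q, exists n (d : 'I_n -> Gam) (x : 'I_n -> Q),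
          (forall i, Qg (d i) (x i)) /\ q = \sum_(i < n) x i &
      (* the sum of the Q_g is direct *)
      forall n (d : 'I_n -> Gam) (x : 'I_n -> Q), injective d ->
          (forall i, Qg (d i) (x i)) -> \sum_(i < n) x i = 0 ->
          forall i, x i = 0].

(* A groupoid structure on the points of G: unit space G0, range r, source s,
   multiplication comp (meaningful on composable pairs s a = r b), inverse inv. *)
Definition composable (G : Type) (r s : G -> G) : set (G * G) :=
  [set p | s p.1 = r p.2].

Definition is_groupoid (G : Type) (G0 : set G) (r s : G -> G)
    (comp : G -> G -> G) (inv : G -> G) : Prop :=
  [/\ (forall x, G0 (r x) /\ G0 (s x)) /\
        (forall u, G0 u -> r u = u /\ s u = u),
      forall a b, s a = r b -> r (comp a b) = r a /\ s (comp a b) = s b,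
      forall a b c, s a = r b -> s b = r c ->
        comp a (comp b c) = comp (comp a b) c,
      forall x, comp (r x) x = x /\ comp x (s x) = x &
      forall x, [/\ r (inv x) = s x, s (inv x) = r x,
                  comp x (inv x) = r x & comp (inv x) x = s x]].

Definition is_topological_groupoid (G : topologicalType) (G0 : set G)
    (r s : G -> G) (comp : G -> G -> G) (inv : G -> G) : Prop :=
  [/\ is_groupoid G0 r s comp inv,
      {within composable r s, continuous (fun p : G * G => comp p.1 p.2)},
      continuous inv, continuous r & continuous s].

Definition locally_compact_space (G : topologicalType) : Prop :=
  forall x : G, exists K : set G, compact K /\ nbhs x K.

Definition open_bisection (G : topologicalType) (r s : G -> G) (B : set G) : Prop :=
  [/\ open B, {in B &, injective r}, {in B &, injective s},
      forall V, open V -> V `<=` B -> open (r @` V) &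
      forall V, open V -> V `<=` B -> open (s @` V)].

Definition ample (G : topologicalType) (r s : G -> G) : Prop :=
  forall (U : set G) (x : G), open U -> U x ->
    exists B, [/\ open_bisection r s B, compact B, B x & B `<=` U].

Definition rel_interior (G : topologicalType) (H A : set G) : set G :=
  [set x | H x /\ exists U : set G, [/\ open U, U x & U `&` H `<=` A]].

Definition effective (G : topologicalType) (G0 : set G) (r s : G -> G)
    (H : set G) : Prop :=
  rel_interior H (H `&` [set x | r x = s x]) = G0 `&` H.

(* continuous groupoid homomorphism into a discrete group *)
Definition cont_hom (G : topologicalType) (r s : G -> G) (comp : G -> G -> G)
    (Gam : Type) (gmul : Gam -> Gam -> Gam) (c : G -> Gam) : Prop :=
  (forall a b, s a = r b -> c (comp a b) = gmul (c a) (c b)) /\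
  (forall g : Gam, open (c @^-1` [set g])).

Definition cocycle (G : topologicalType) (r s : G -> G) (comp : G -> G -> G)
    (F : fieldType) (sigma : G -> G -> F) : Prop :=
  [/\ forall a b, s a = r b -> sigma a b != 0,
      forall a b c, s a = r b -> s b = r c ->
        sigma a b * sigma (comp a b) c = sigma a (comp b c) * sigma b c,
      forall x, sigma (r x) x = 1 /\ sigma x (s x) = 1 &
      (* continuity on G^(2) into the discrete space F *)
      forall p : G * G, composable r s p ->
        exists W : set (G * G), [/\ open W, W p &
          forall q, W q -> composable r s q -> sigma q.1 q.2 = sigma p.1 p.2]].

Definition supp (G : Type) (F : fieldType) (f : G -> F) : set G :=
  [set x | f x != 0].

Definition locally_constant (G : topologicalType) (F : Type) (f : G -> F) : Prop :=
  forall x : G, exists U : set G, [/\ open U, U x & forall y, U y -> f y = f x].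

Definition steinberg (G : topologicalType) (F : fieldType) : set (G -> F) :=
  [set f | locally_constant f /\ compact (closure (supp f))].

(* the twisted convolution product:
   (f g)(x) = sum_{a b = x} sigma(a, b) f(a) g(b)
            = sum_{a, r a = r x} sigma(a, a^-1 x) f(a) g(a^-1 x)  *)
Definition conv (G : topologicalType) (r : G -> G) (comp : G -> G -> G)
    (inv : G -> G) (F : fieldType) (sigma : G -> G -> F) (f g : G -> F) : G -> F :=
  fun x => \sum_(a \in [set a | r a = r x])
             sigma a (comp (inv a) x) * f a * g (comp (inv a) x).

Definition steinberg_hom (G : topologicalType) (F : fieldType) (Gam : Type)
    (c : G -> Gam) (gam : Gam) : set (G -> F) :=
  [set f | steinberg f /\ supp f `<=` c @^-1` [set gam]].

Definition indic1 (G : Type) (F : fieldType) (K : set G) : G -> F :=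
  fun x => (x \in K)%:R.

(* If [pi] is injective, [pi (1_K) <> 0] because [1_K <> 0]. Conversely,
   suppose [f] is a nonzero element of the kernel of [pi]. Since [pi] is graded
   and the grading of [Q] is direct, some homogeneous component [h] of [f],
   nonzero at some arrow [x], also lies in the kernel. Pick a compact open
   bisection [B] around [x^-1] on which [c], [h \o inv] and [sigma a a^-1] are
   constant; then [1_B * h] lives on the compact set [B . supp h] of degree [e].
   Effectiveness of [c^-1 e] provides a nonempty compact open [K] inside
   [r(B)] such that no arrow of that set off the unit space has both its range
   and its source in [K]. Up to a nonzero scalar,
   [1_(B /\ r^-1 K) * h * 1_K = 1_K], so [pi (1_K) = 0]. *)

From HB Require Import structures.
From mathcomp Require Import all_boot all_order all_algebra.
From mathcomp Require Import boolp classical_sets functions cardinality fsbigop.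
From mathcomp Require Import topology.
Import Order.TTheory GRing.Theory Num.Theory.
Local Open Scope classical_set_scope.
Local Open Scope ring_scope.

Set Implicit Arguments.
Unset Strict Implicit.
Unset Printing Implicit Defensive.

Section Groupoid.
Variables (G : Type) (G0 : set G) (r s : G -> G) (comp : G -> G -> G) (inv : G -> G).
Hypothesis HG : is_groupoid G0 r s comp inv.

Lemma unit_r x : G0 (r x). Proof. by case: HG => [[/(_ x)[]]]. Qed.
Lemma unit_s x : G0 (s x). Proof. by case: HG => [[/(_ x)[]]]. Qed.
Lemma r_id u : G0 u -> r u = u. Proof. by case: HG => [[_ /(_ u) H]] _ _ _ _ /H[]. Qed.
Lemma s_id u : G0 u -> s u = u. Proof. by case: HG => [[_ /(_ u) H]] _ _ _ _ /H[]. Qed.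

Lemma r_comp a b : s a = r b -> r (comp a b) = r a.
Proof. by case: HG => _ H _ _ _ /H[]. Qed.
Lemma s_comp a b : s a = r b -> s (comp a b) = s b.
Proof. by case: HG => _ H _ _ _ /H[]. Qed.
Lemma compA a b c : s a = r b -> s b = r c -> comp a (comp b c) = comp (comp a b) c.
Proof. by case: HG => _ _ H _ _; apply: H. Qed.

Lemma comp_rx x : comp (r x) x = x. Proof. by case: HG => _ _ _ /(_ x)[]. Qed.
Lemma comp_xs x : comp x (s x) = x. Proof. by case: HG => _ _ _ /(_ x)[]. Qed.
Lemma r_inv x : r (inv x) = s x. Proof. by case: HG => _ _ _ _ /(_ x)[]. Qed.
Lemma s_inv x : s (inv x) = r x. Proof. by case: HG => _ _ _ _ /(_ x)[]. Qed.
Lemma comp_xinv x : comp x (inv x) = r x. Proof. by case: HG => _ _ _ _ /(_ x)[]. Qed.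
Lemma comp_invx x : comp (inv x) x = s x. Proof. by case: HG => _ _ _ _ /(_ x)[]. Qed.

Lemma invK x : inv (inv x) = x.
Proof.
have -> : inv (inv x) = comp (inv (inv x)) (comp (inv x) x).
  by rewrite comp_invx -r_inv -s_inv comp_xs.
by rewrite compA ?s_inv ?r_inv // comp_invx s_inv comp_rx.
Qed.

Lemma comp_inv_r x : comp (inv x) (r x) = inv x.
Proof. by rewrite -s_inv comp_xs. Qed.

Lemma r_comp_inv a y : r a = r y -> r (comp (inv a) y) = s a.
Proof. by move=> ay; rewrite r_comp ?r_inv // s_inv. Qed.
Lemma s_comp_inv a y : r a = r y -> s (comp (inv a) y) = s y.
Proof. by move=> ay; rewrite s_comp // s_inv. Qed.

Lemma compKV a y : r a = r y -> comp a (comp (inv a) y) = y.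
Proof. by move=> ay; rewrite compA ?r_inv ?s_inv // comp_xinv ay comp_rx. Qed.

Lemma comp_inv_unit a y : r a = r y -> G0 (comp (inv a) y) -> a = y.
Proof.
by move=> ay /r_id u1; rewrite -(compKV ay) -u1 r_comp_inv // comp_xs.
Qed.

End Groupoid.

Lemma open_from_nbhds (T : topologicalType) (A : set T) :
  (forall x, A x -> exists B, [/\ open B, B x & B `<=` A]) -> open A.
Proof.
move=> H; rewrite openE => x /H [B [oB Bx BA]].
by rewrite /interior nbhsE; exists B.
Qed.

Lemma hausdorff_separate (T : topologicalType) (x y : T) :
  hausdorff_space T -> x <> y ->
  exists A B, [/\ open A, open B, A x, B y & forall z, A z -> B z -> False].
Proof.
rewrite open_hausdorff => H /eqP /H [[A B]] /=; rewrite !inE => -[Ax By] [oA oB AB].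
exists A, B; split => // z Az Bz.
by have : (A `&` B) z by []; rewrite AB.
Qed.

Lemma compact_finite_subcover (T : topologicalType) (A : set T)
    (I : choiceType) (D : set I) (f : I -> set T) :
  compact A -> (forall i, D i -> open (f i)) -> A `<=` cover D f ->
  finite_subset_cover D f A.
Proof.
(* [compact_cover] is stated for pointed spaces; a point of [A] will do. *)
have [[x Ax]|A0] := pselect (A !=set0); last first.
  move=> *; exists (fset_set set0) => [y|y Ay]; first by rewrite in_fset_set // inE.
  by case: A0; exists y.
pose Tp : ptopologicalType := HB.pack T (isPointed.Build T x).
by move=> cA; have : @compact Tp A by []; rewrite compact_cover; apply.
Qed.

Section TopologicalGroupoid.
Variables (G : topologicalType) (G0 : set G) (r s : G -> G).
Variables (comp : G -> G -> G) (inv : G -> G).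
Hypothesis HG : is_topological_groupoid G0 r s comp inv.
Hypothesis Hhaus : hausdorff_space G.
Hypothesis Hample : ample r s.

Let Hg : is_groupoid G0 r s comp inv. Proof. by case: HG. Qed.

Lemma continuous_r : continuous r. Proof. by case: HG. Qed.
Lemma continuous_s : continuous s. Proof. by case: HG. Qed.
Lemma continuous_inv : continuous inv. Proof. by case: HG. Qed.

Lemma open_map_r V : open V -> open (r @` V).
Proof.
move=> oV; apply: open_from_nbhds => _ [v Vv <-].
have [B [[oB _ _ rB _] _ Bv BV]] := Hample oV Vv.
exists (r @` B); split; [exact: rB|by exists v|].
by move=> _ [b /BV Vb <-]; exists b.
Qed.

Lemma open_map_s V : open V -> open (s @` V).
Proof.
move=> oV; apply: open_from_nbhds => _ [v Vv <-].
have [B [[oB _ _ _ sB] _ Bv BV]] := Hample oV Vv.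
exists (s @` B); split; [exact: sB|by exists v|].
by move=> _ [b /BV Vb <-]; exists b.
Qed.

Lemma open_units : open G0.
Proof.
apply: open_from_nbhds => u Gu; exists (r @` setT); split.
- exact/open_map_r/openT.
- by exists u => //; rewrite (r_id Hg).
- by move=> _ [x _ <-]; apply: (unit_r Hg).
Qed.

Lemma closed_units : closed G0.
Proof.
rewrite -openC; apply: open_from_nbhds => x nG0x.
have rx : r x <> x by move=> rxx; apply: nG0x; rewrite -rxx; apply: (unit_r Hg).
have [A [B [oA oB Arx Bx AB]]] := hausdorff_separate Hhaus rx.
exists (r @^-1` A `&` B); split => //.
- by apply: openI => //; apply: (continuousP r).1 continuous_r _ oA.
- by move=> y [Ary By] /(r_id Hg) ry; apply: (AB y) => //; rewrite -ry.
Qed.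

Lemma closed_composable : closed (composable r s).
Proof.
rewrite -openC; apply: open_from_nbhds => p np.
have [A [B [oA oB Ap Bp AB]]] := hausdorff_separate Hhaus np.
have oA' := (continuousP s).1 continuous_s _ oA.
have oB' := (continuousP r).1 continuous_r _ oB.
exists (s @^-1` A `*` r @^-1` B); split => //.
- rewrite openE => q [Aq Bq]; exists (s @^-1` A, r @^-1` B) => //.
  by split; apply: open_nbhs_nbhs.
- by move=> q [Aq Bq] /= sr; apply: (AB (s q.1)) => //; rewrite sr.
Qed.

Lemma compact_comp_image (A B : set G) : compact A -> compact B ->
  compact ((fun p : G * G => comp p.1 p.2) @` (A `*` B `&` composable r s)).
Proof.
move=> cA cB; apply: continuous_compact.
  by case: HG => _ + _ _ _; apply: continuous_subspaceW => p [].
exact: compact_closedI (compact_setX cA cB) closed_composable.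
Qed.

End TopologicalGroupoid.

Section Grading.
Variables (G : topologicalType) (r s : G -> G) (comp : G -> G -> G).
Variables (Gam : Type) (gmul : Gam -> Gam -> Gam) (e : Gam) (c : G -> Gam).
Hypothesis Hc : cont_hom r s comp gmul c.

Lemma open_fibre g : open (c @^-1` [set g]). Proof. by case: Hc. Qed.

Lemma closed_fibre g : closed (c @^-1` [set g]).
Proof.
rewrite -openC; apply: open_from_nbhds => x nx.
by exists (c @^-1` [set c x]); split => //; [exact: open_fibre|move=> y /= ->].
Qed.

Lemma hom_unit (G0 : set G) (inv : G -> G) (ginv : Gam -> Gam) u :
  is_groupoid G0 r s comp inv -> is_group gmul e ginv -> G0 u -> c u = e.
Proof.
move=> Hg [gA g1 gV] u0; have [Hm _] := Hc.
have cuu : gmul (c u) (c u) = c u.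
  by rewrite -Hm ?(s_id Hg u0) ?(r_id Hg u0) // -{1}(r_id Hg u0) (comp_rx Hg).
by rewrite -(gV (c u)).1 -{3}cuu gA (gV (c u)).1 (g1 (c u)).1.
Qed.

Lemma finite_degrees (S : set G) : compact S ->
  exists n (d : 'I_n -> Gam), injective d /\ forall y, S y -> exists i, d i = c y.
Proof.
move=> cS; have [y _|y Sy|D _ SD] :=
  compact_finite_subcover (D := S) (f := fun y => c @^-1` [set c y]) cS.
- exact: open_fibre.
- by exists y.
pose T : eqType := HB.pack Gam (gen_eqMixin Gam).
pose ds : seq T := undup [seq c y : T | y <- finmap.enum_fset D].
have ds_c y : S y -> (c y : T) \in ds.
  by move=> /SD [y' y'D /= ->]; rewrite (@mem_undup T); apply: map_f.
exists (size ds), (fun i => nth e ds i); split.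
  move=> i j dij; apply: val_inj; apply/eqP.
  by rewrite -(@nth_uniq T e _ _ _ (ltn_ord i) (ltn_ord j) (undup_uniq _)); apply/eqP.
move=> y /ds_c yds; have iy : (index (c y : T) ds < size ds)%N by rewrite index_mem.
by exists (Ordinal iy); rewrite /= (@nth_index T).
Qed.

End Grading.

Section SteinbergFunctions.
Variables (G : topologicalType) (F : fieldType).
Hypothesis Hhaus : hausdorff_space G.

Lemma indic1_in (K : set G) x : K x -> indic1 F K x = 1.
Proof. by move=> Kx; rewrite /indic1 mem_set. Qed.

Lemma indic1_notin (K : set G) x : ~ K x -> indic1 F K x = 0.
Proof. by move=> Kx; rewrite /indic1 memNset. Qed.

Lemma locally_constant_cst (a : F) : locally_constant (fun _ : G => a).
Proof. by move=> x; exists setT; split => //; exact: openT. Qed.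

Lemma locally_constant_op2 (op : F -> F -> F) (f g : G -> F) :
  locally_constant f -> locally_constant g ->
  locally_constant (fun x => op (f x) (g x)).
Proof.
move=> lf lg x; have [U [oU Ux fU]] := lf x; have [V [oV Vx gV]] := lg x.
exists (U `&` V); split => //; first exact: openI.
by move=> y [Uy Vy]; rewrite fU ?gV.
Qed.

Lemma locally_constant_comp (phi : G -> G) (f : G -> F) :
  continuous phi -> locally_constant f -> locally_constant (fun x => f (phi x)).
Proof.
move=> cphi lf x; have [U [oU Ux fU]] := lf (phi x).
by exists (phi @^-1` U); split => //; [exact: (continuousP phi).1|move=> y /fU].
Qed.

Lemma locally_constant_indic1 (K : set G) :
  open K -> closed K -> locally_constant (indic1 F K).
Proof.
move=> oK cK x; have [Kx|nKx] := pselect (K x).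
  by exists K; split => // y Ky; rewrite !indic1_in.
exists (~` K); split => //; first by rewrite openC.
by move=> y nKy; rewrite !indic1_notin.
Qed.

Lemma steinberg_supp_sub (f g : G -> F) :
  locally_constant g -> supp g `<=` supp f -> steinberg f -> steinberg g.
Proof.
move=> lg gf [_ cf]; split => //.
by apply: subclosed_compact cf _; [exact: closed_closure|exact: closureS].
Qed.

Lemma steinberg_compact_supp (g : G -> F) (K : set G) :
  locally_constant g -> supp g `<=` K -> compact K -> steinberg g.
Proof.
move=> lg gK cK; split => //; apply: (subclosed_compact _ cK).
  exact: closed_closure.
have /closure_id -> := compact_closed Hhaus cK.
exact: closureS.
Qed.

Lemma steinberg_indic1 (K : set G) :
  open K -> compact K -> steinberg (indic1 F K).
Proof.
move=> oK cK; apply: (steinberg_compact_supp _ _ cK).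
  exact: locally_constant_indic1 oK (compact_closed Hhaus cK).
by move=> x /eqP; apply: contra_notP => /indic1_notin.
Qed.

Lemma steinberg_scale (mu : F) (f : G -> F) :
  steinberg f -> steinberg (fun x => mu * f x).
Proof.
move=> Sf; apply: (steinberg_supp_sub _ _ Sf); last first.
  by move=> x; rewrite /supp /=; apply: contra_neq => ->; rewrite mulr0.
exact: locally_constant_op2 (locally_constant_cst mu) Sf.1.
Qed.

Lemma steinberg0 : steinberg (fun _ : G => 0 : F).
Proof.
split; first exact: locally_constant_cst.
suff -> : supp (fun _ : G => 0 : F) = set0 by rewrite closure0; exact: compact0.
by apply/seteqP; split => x //=; rewrite /supp /= eqxx.
Qed.

Lemma steinberg_op2 (op : F -> F -> F) (f g : G -> F) : op 0 0 = 0 ->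
  steinberg f -> steinberg g -> steinberg (fun x => op (f x) (g x)).
Proof.
move=> op00 [lf cf] [lg cg].
apply: (steinberg_compact_supp (K := closure (supp f) `|` closure (supp g))).
- exact: locally_constant_op2.
- move=> x /eqP; apply: contra_notP => /not_orP[nf ng].
  have [fx gx] : f x = 0 /\ g x = 0.
    by split; apply: contrapT => /eqP ?; [apply: nf|apply: ng]; exact: subset_closure.
  by rewrite fx gx.
- exact: compactU.
Qed.

End SteinbergFunctions.

Lemma fsbig_single (I : choiceType) (V : nmodType) (P : set I) (f : I -> V) a0 :
  P a0 -> (forall a, P a -> a <> a0 -> f a = 0) -> \sum_(a \in P) f a = f a0.
Proof.
move=> Pa0 f0; rewrite -(fsbig_widen [set a0]) ?fsbig_set1 //; first by move=> a ->.
by move=> a [Pa /= na]; apply: f0.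
Qed.

Section Convolution.
Variables (G : topologicalType) (G0 : set G) (r s : G -> G).
Variables (comp : G -> G -> G) (inv : G -> G).
Hypothesis Hg : is_groupoid G0 r s comp inv.
Variables (F : fieldType) (sigma : G -> G -> F).
Hypothesis Hsigma : cocycle r s comp sigma.

Local Notation conv := (conv r comp inv sigma).

Lemma cocycle_s x : sigma x (s x) = 1. Proof. by case: Hsigma => _ _ /(_ x)[]. Qed.

Lemma cocycle_neq0 a b : s a = r b -> sigma a b != 0.
Proof. by case: Hsigma => + _ _ _; apply. Qed.

Lemma conv_single (f g : G -> F) y a0 : r a0 = r y ->
  (forall a, r a = r y -> a <> a0 ->
     sigma a (comp (inv a) y) * f a * g (comp (inv a) y) = 0) ->
  conv f g y = sigma a0 (comp (inv a0) y) * f a0 * g (comp (inv a0) y).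
Proof. exact: fsbig_single. Qed.

Lemma conv_none (f g : G -> F) y :
  (forall a, r a = r y -> sigma a (comp (inv a) y) * f a * g (comp (inv a) y) = 0) ->
  conv f g y = 0.
Proof. exact: fsbig1. Qed.

Lemma conv_indic1_units (K : set G) (f : G -> F) : K `<=` G0 ->
  conv f (indic1 F K) = fun y => f y * indic1 F K (s y).
Proof.
move=> KG0; apply/funext => y; rewrite (@conv_single _ _ y y) //.
  by rewrite (comp_invx Hg) cocycle_s mul1r.
move=> a ay nay; rewrite indic1_notin ?mulr0 // => /KG0.
by move/(comp_inv_unit Hg ay).
Qed.

(* As [r] is injective on [B], at most one term of the outer convolution
   survives at [y]; off the unit space the last hypothesis makes it vanish. *)
Lemma conv_bisection_indic1 (B K : set G) (h : G -> F) (lam : F) :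
  {in B &, injective r} -> K `<=` G0 -> K `<=` r @` B -> lam != 0 ->
  (forall a, B a -> sigma a (inv a) * h (inv a) = lam) ->
  (forall a y, B a -> r a = r y -> K (r y) -> K (s y) ->
     h (comp (inv a) y) != 0 -> G0 y) ->
  conv (fun x => lam^-1 * indic1 F (B `&` r @^-1` K) x) (conv h (indic1 F K))
  = indic1 F K.
Proof.
move=> rinj KG0 KrB lam0 Blam separated; rewrite conv_indic1_units //.
apply/funext => y; have [[a [Ba Kra ay]]|none] :=
  pselect (exists a, [/\ B a, K (r a) & r a = r y]); last first.
  rewrite conv_none => [|a ay]; last first.
    by rewrite indic1_notin ?mulr0 ?mul0r // => -[Ba Ka]; apply: none; exists a.
  rewrite indic1_notin // => Ky; have [b Bb rby] := KrB y Ky.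
  by apply: none; exists b; rewrite rby (r_id Hg (KG0 y Ky)).
rewrite (conv_single (a0 := a)) // => [|a' a'y a'a]; last first.
  have [[Ba' Ka']|nBK] := pselect ((B `&` r @^-1` K) a'); last first.
    by rewrite indic1_notin // !mulr0 mul0r.
  by case: a'a; apply: rinj; rewrite ?inE // a'y.
rewrite indic1_in // mulr1 (s_comp_inv Hg ay).
have [y0|ny0] := pselect (G0 y).
  have Ky : K y by rewrite -(r_id Hg y0) -ay.
  rewrite -(r_id Hg y0) -ay (comp_inv_r Hg) ay (r_id Hg y0) (s_id Hg y0).
  by rewrite !indic1_in // mulr1 mulrAC Blam // mulfV.
rewrite [RHS]indic1_notin; last by move/KG0.
have [Ksy|nKsy] := pselect (K (s y)); last by rewrite indic1_notin // !mulr0.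
have [->|hy] := eqVneq (h (comp (inv a) y)) 0; first by rewrite !mul0r mulr0.
by case: ny0; apply: (separated a) => //; rewrite -ay.
Qed.

End Convolution.

Section Effective.
Variables (G : topologicalType) (G0 : set G) (r s : G -> G).
Variables (comp : G -> G -> G) (inv : G -> G).
Hypothesis HG : is_topological_groupoid G0 r s comp inv.
Hypothesis Hhaus : hausdorff_space G.
Hypothesis Hample : ample r s.
Variables (Gam : Type) (gmul : Gam -> Gam -> Gam) (e : Gam) (c : G -> Gam).
Hypothesis Hc : cont_hom r s comp gmul c.
Hypothesis Heff : effective G0 r s (c @^-1` [set e]).

Definition offunit_slice (O : set G) :=
  [/\ open O, O `<=` c @^-1` [set e] `\` G0 & {in O &, injective s}].

(* Either some arrow of [O] over [W] moves its source, and then a Hausdorff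
   separation of its range and source cuts [W] down, or all of them are
   isotropy, which effectiveness rules out. *)
Lemma offunit_slice_shrink (O W : set G) : offunit_slice O -> open W -> W !=set0 ->
  exists2 W', [/\ open W', W' !=set0 & W' `<=` W] &
    forall z, O z -> W' (r z) -> W' (s z) -> False.
Proof.
move=> [oO Oe sinj] oW W0.
have [[z [Oz Wsz rzsz]]|isotropy] := pselect (exists z, [/\ O z, W (s z) & r z <> s z]).
  have [A [B [oA oB Asz Brz AB]]] := hausdorff_separate Hhaus (nesym rzsz).
  exists (s @` (O `&` s @^-1` (W `&` A) `&` r @^-1` B)).
    split; last by move=> _ [x [[_ [Wsx _]] _] <-].
      apply: (open_map_s Hample); apply: openI; first apply: openI => //.
        by apply: (continuousP s).1 (continuous_s HG) _ _; exact: openI.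
      exact: (continuousP r).1 (continuous_r HG) _ oB.
    by exists (s z); exists z.
  move=> z1 Oz1 [z3 [[Oz3 [_ Az3]] _] sz3] [z2 [[Oz2 _] Bz2] sz2].
  have z21 : z2 = z1 by apply: sinj; rewrite ?inE.
  by apply: (AB (r z1)); [rewrite -sz3|rewrite -z21].
exists W; first by split.
move=> z Oz _ Wsz.
have rs z' : O z' -> W (s z') -> r z' = s z'.
  by move=> Oz' Wsz'; apply: contrapT => ne; apply: isotropy; exists z'.
have : rel_interior (c @^-1` [set e]) (c @^-1` [set e] `&` [set x | r x = s x]) z.
  split; first by have [] := Oe z Oz.
  exists (O `&` s @^-1` W); split => //.
    by apply: openI => //; exact: (continuousP s).1 (continuous_s HG) _ oW.
  by move=> z' [[Oz' Wz'] ez']; split => //; apply: rs.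
by rewrite Heff => -[G0z _]; case: (Oe z Oz) => _; apply.
Qed.

Lemma offunit_slices_shrink (O : G -> set G) (ys : seq G) (W : set G) :
  (forall y, offunit_slice (O y)) -> open W -> W !=set0 ->
  exists2 W', [/\ open W', W' !=set0 & W' `<=` W] &
    forall y z, y \in ys -> O y z -> W' (r z) -> W' (s z) -> False.
Proof.
move=> slices; elim: ys W => [|y ys IH] W oW W0; first by exists W; first split.
have [W1 [oW1 W10 W1W] H1] := IH W oW W0.
have [W2 [oW2 W20 W2W1] H2] := offunit_slice_shrink (slices y) oW1 W10.
exists W2; first by split => // x /W2W1 /W1W.
move=> y' z; rewrite inE => /orP[/eqP -> | y'ys] Oz rz sz; first exact: (H2 z).
by apply: (H1 y' z y'ys Oz); apply: W2W1.
Qed.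

(* Cover the compact set of non-unit arrows of [C] by finitely many slices and
   shrink [W] against each of them. *)
Lemma compact_open_separating (C W : set G) : compact C ->
  C `<=` c @^-1` [set e] -> open W -> W !=set0 ->
  exists K, [/\ open K, compact K, K !=set0, K `<=` W &
    forall z, C z -> K (r z) -> K (s z) -> G0 z].
Proof.
move=> cC Ce oW W0; pose C' := C `&` ~` G0.
have cC' : compact C'.
  by apply: compact_closedI; rewrite // closedC; exact: (open_units HG Hample).
have [O HO] : {O : G -> set G & forall y, offunit_slice (O y) /\ (C' y -> O y y)}.
  apply: (@choice _ _ (fun y O => offunit_slice O /\ (C' y -> O y))) => y.
  have [[Cy nGy]|nC'y] := pselect (C' y); last first.
    exists set0; split => [|/nC'y//]; split => //; first exact: open0.
    by move=> ? ? /set_mem[].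
  have oV : open (c @^-1` [set e] `&` ~` G0).
    by apply: openI; [exact: (open_fibre Hc)|rewrite openC; exact: (closed_units HG Hhaus)].
  have [B [[oB _ sinj _ _] _ By BV]] := Hample oV (conj (Ce y Cy) nGy).
  by exists B; split => //; split => // z /BV[].
have oO y : open (O y) by have [[]] := HO y.
have [D _ C'D] := compact_finite_subcover cC' (fun y _ => oO y)
  (fun y C'y => ex_intro2 _ _ y C'y ((HO y).2 C'y)).
have [W' [oW' [w W'w] W'W] sep] :=
  offunit_slices_shrink (finmap.enum_fset D) (fun y => (HO y).1) oW W0.
have [K [[oK _ _ _ _] cK Kw KW']] := Hample oW' W'w.
exists K; split => //; [by exists w|by move=> x /KW' /W'W|].
move=> z Cz Krz Ksz; apply: contrapT => nGz.
have [y yD Oyz] := C'D z (conj Cz nGz).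
by apply: (sep y z yD Oyz); apply: KW'.
Qed.

End Effective.

Lemma rng_mulr0 (Q : zmodType) (mulQ : Q -> Q -> Q) a :
  is_rng mulQ -> mulQ a 0 = 0.
Proof.
by case=> _ mulQDr _; apply: (@addrI _ (mulQ a 0)); rewrite -mulQDr !addr0.
Qed.

Lemma rng_mul0r (Q : zmodType) (mulQ : Q -> Q -> Q) a :
  is_rng mulQ -> mulQ 0 a = 0.
Proof. by case=> _ _ mulQDl; apply: (@addrI _ (mulQ 0 a)); rewrite -mulQDl !addr0. Qed.

Section Representation.
Variables (F : fieldType) (G : topologicalType) (G0 : set G) (r s : G -> G).
Variables (comp : G -> G -> G) (inv : G -> G).
Hypothesis HG : is_topological_groupoid G0 r s comp inv.
Hypothesis Hhaus : hausdorff_space G.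
Hypothesis Hample : ample r s.
Variable sigma : G -> G -> F.
Hypothesis Hsigma : cocycle r s comp sigma.
Variables (Gam : Type) (gmul : Gam -> Gam -> Gam) (e : Gam) (ginv : Gam -> Gam).
Hypothesis HGam : is_group gmul e ginv.
Variable c : G -> Gam.
Hypothesis Hc : cont_hom r s comp gmul c.
Hypothesis Heff : effective G0 r s (c @^-1` [set e]).
Variables (Q : zmodType) (mulQ : Q -> Q -> Q) (Qg : Gam -> set Q).
Hypothesis HQ : is_graded_rng gmul mulQ Qg.
Variable pi : (G -> F) -> Q.
Hypothesis pi_add : forall f g, steinberg f -> steinberg g ->
  pi (fun x => f x + g x) = pi f + pi g.
Hypothesis pi_mul : forall f g, steinberg f -> steinberg g ->
  pi (conv r comp inv sigma f g) = mulQ (pi f) (pi g).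
Hypothesis pi_graded : forall (gam : Gam) (f : G -> F),
  steinberg_hom c gam f -> Qg gam (pi f).

Lemma pi0 : pi (fun _ => 0) = 0.
Proof.
have := pi_add (steinberg0 G F) (steinberg0 G F).
under eq_fun do rewrite addr0.
by move=> E; apply: (@addIr _ (pi (fun _ => 0))); rewrite add0r -E.
Qed.

Lemma pi_sum n (hs : 'I_n -> G -> F) : (forall i, steinberg (hs i)) ->
  pi (\sum_(i < n) hs i) = \sum_(i < n) pi (hs i).
Proof.
move=> Shs; suff [] : steinberg (\sum_(i < n) hs i) /\
    pi (\sum_(i < n) hs i) = \sum_(i < n) pi (hs i) by [].
apply: (big_ind2 (fun f q => steinberg f /\ pi f = q)) => //.
- by split; [exact: steinberg0|exact: pi0].
- move=> f1 q1 f2 q2 [S1 <-] [S2 <-]; split; last exact: pi_add.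
  by apply: steinberg_op2 => //; rewrite addr0.
Qed.

Lemma kernel_homogeneous_part (h0 : G -> F) x0 :
  steinberg h0 -> pi h0 = 0 -> h0 x0 != 0 ->
  exists h, [/\ steinberg h, pi h = 0, supp h `<=` c @^-1` [set c x0] & h x0 != 0].
Proof.
move=> Sh0 pih0 hx0; have [n [d [dinj dS]]] := finite_degrees e Hc Sh0.2.
have h0_deg y : h0 y != 0 -> exists i, d i = c y.
  by move=> hy; apply: dS; apply: subset_closure.
pose hs i y := h0 y * indic1 F (c @^-1` [set d i]) y.
have hs_deg i : supp (hs i) `<=` c @^-1` [set d i].
  move=> y; rewrite /supp /hs /= => /eqP.
  by apply: contra_notP => ncy; rewrite indic1_notin // mulr0.
have Shs i : steinberg (hs i).
  apply: (steinberg_supp_sub _ _ Sh0); last first.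
    by move=> y; rewrite /supp /hs /=; apply: contra_neq => ->; rewrite mul0r.
  apply: locally_constant_op2; first exact: Sh0.1.
  by apply: locally_constant_indic1; [exact: open_fibre Hc _|exact: closed_fibre Hc _].
have hsE : \sum_(i < n) hs i = h0.
  apply/funext => y; rewrite fct_sumE.
  have [h0y|/h0_deg[i di]] := eqVneq (h0 y) 0.
    by rewrite h0y big1 // => i _; rewrite /hs h0y mul0r.
  rewrite (bigD1 i) //= big1 ?addr0 => [|j ji]; first by rewrite /hs indic1_in ?mulr1.
  by rewrite /hs indic1_notin ?mulr0 //= -di => /dinj ij; rewrite ij eqxx in ji.
have pi_hs0 : forall i, pi (hs i) = 0.
  case: HQ => _ _ _ _ direct; apply: (direct n d _ dinj).
    by move=> i; apply: pi_graded; split; [exact: Shs|exact: hs_deg].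
  by rewrite -pi_sum // hsE.
have [i di] := h0_deg x0 hx0.
exists (hs i); split => //; first by rewrite -di.
by rewrite /hs indic1_in ?mulr1.
Qed.

Let Hg : is_groupoid G0 r s comp inv. Proof. by case: HG. Qed.

Lemma bisection_near_inverse (h : G -> F) x0 : locally_constant h ->
  exists B, [/\ open B, compact B, {in B &, injective r}, B (inv x0) &
    forall a, B a -> [/\ c a = c (inv x0), h (inv a) = h x0 &
                          sigma a (inv a) = sigma (inv x0) x0]].
Proof.
move=> lh; have [Uh [oUh Uhx0 hUh]] := lh x0.
have [_ _ _ /(_ (inv x0, x0))] := Hsigma.
case=> [|W [oW Wx0 Wsig]]; first by rewrite /composable /= (s_inv Hg).
have [[P1 P2] [/= + +] P12] : nbhs (inv x0, x0) W by exact: open_nbhs_nbhs.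
rewrite !nbhsE => -[A1 [oA1 A1x] A1P] -[A2 [oA2 A2x] A2P].
pose U := c @^-1` [set c (inv x0)] `&` inv @^-1` (Uh `&` A2) `&` A1.
have oU : open U.
  apply: openI => //; apply: openI; first exact: open_fibre Hc _.
  by apply: (continuousP inv).1 (continuous_inv HG) _ _; exact: openI.
have [|B [[oB rinj _ _ _] cB Bx BU]] := Hample oU (x := inv x0).
  by split => //; split => //=; rewrite (invK Hg).
exists B; split => // a /BU [[ca [/hUh ha A2a]] A1a]; split => //.
apply: (Wsig (a, inv a)); last by rewrite /composable /= (r_inv Hg).
by apply: P12; split; [exact: A1P|exact: A2P].
Qed.

Lemma steinberg_conv_indic1_units (h : G -> F) (K : set G) : K `<=` G0 ->
  open K -> closed K -> steinberg h -> steinberg (conv r comp inv sigma h (indic1 F K)).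
Proof.
move=> KG0 oK cK Sh; rewrite (conv_indic1_units Hg Hsigma) //.
apply: (steinberg_supp_sub _ _ Sh); last first.
  by move=> y; rewrite /supp /=; apply: contra_neq => ->; rewrite mul0r.
apply: locally_constant_op2; first exact: Sh.1.
by apply: locally_constant_comp; [exact: continuous_s HG|exact: locally_constant_indic1].
Qed.

Lemma homogeneous_kernel_indic1 (h : G -> F) x0 :
  steinberg h -> pi h = 0 -> supp h `<=` c @^-1` [set c x0] -> h x0 != 0 ->
  exists K, [/\ K `<=` G0, K !=set0, compact K, open K & pi (indic1 F K) = 0].
Proof.
move=> Sh pih hdeg hx0.
have [B [oB cB rinj Bx BP]] := bisection_near_inverse x0 Sh.1.
pose C := (fun p : G * G => comp p.1 p.2) @` (B `*` closure (supp h) `&` composable r s)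
  `&` c @^-1` [set e].
have cC : compact C.
  apply: compact_closedI; last exact: closed_fibre Hc _.
  by apply: (compact_comp_image HG Hhaus); [exact: cB|exact: Sh.2].
have [|K [oK cK K0 KrB sepK]] :=
  compact_open_separating HG Hhaus Hample Hc Heff cC (fun _ => @proj2 _ _)
    (open_map_r Hample oB).
  by exists (r (inv x0)), (inv x0).
have KG0 : K `<=` G0 by move=> _ /KrB [b _ <-]; apply: (unit_r Hg).
pose lam := sigma (inv x0) x0 * h x0.
have lam0 : lam != 0 by rewrite mulf_neq0 // (cocycle_neq0 Hsigma) // (s_inv Hg).
have separated a y : B a -> r a = r y -> K (r y) -> K (s y) ->
    h (comp (inv a) y) != 0 -> G0 y.
  move=> Ba ay Kry Ksy hay; apply: sepK => //; split.
    exists (a, comp (inv a) y); last exact: (compKV Hg ay).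
    split; first by split => //=; apply: subset_closure.
    by rewrite /composable /= (r_comp_inv Hg ay).
  have [ca _ _] := BP a Ba; have [c_comp _] := Hc.
  rewrite /= -(compKV Hg ay) c_comp ?(r_comp_inv Hg ay) // ca (hdeg _ hay).
  by rewrite -c_comp ?(s_inv Hg) // (comp_invx Hg) (hom_unit Hc Hg HGam (unit_s Hg _)).
have Blam a : B a -> sigma a (inv a) * h (inv a) = lam by case/BP => _ -> ->.
have clK : closed K by exact: compact_closed.
have [orK crK] : clopen (r @^-1` K) by apply: preimage_clopen; [|exact: continuous_r HG].
have Sf1 : steinberg (fun x => lam^-1 * indic1 F (B `&` r @^-1` K) x).
  apply/steinberg_scale/(@steinberg_indic1 G F Hhaus); first exact: openI.
  exact: compact_closedI.
have Sf2 := steinberg_conv_indic1_units KG0 oK clK Sh.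
have SK : steinberg (indic1 F K) by exact: steinberg_indic1.
have Qrng : is_rng mulQ by case: HQ.
exists K; split => //.
rewrite -(conv_bisection_indic1 Hg Hsigma rinj KG0 KrB lam0 Blam separated).
by rewrite !pi_mul // pih (rng_mul0r _ Qrng) (rng_mulr0 _ Qrng).
Qed.

End Representation.

Theorem theorem7p2
  (F : fieldType)
  (G : topologicalType) (G0 : set G) (r s : G -> G)
  (comp : G -> G -> G) (inv : G -> G)
  (HG : is_topological_groupoid G0 r s comp inv)
  (Hhaus : hausdorff_space G) (Hlc : locally_compact_space G)
  (Hample : ample r s)
  (sigma : G -> G -> F) (Hsigma : cocycle r s comp sigma)
  (Gam : Type) (gmul : Gam -> Gam -> Gam) (e : Gam) (ginv : Gam -> Gam)
  (HGam : is_group gmul e ginv)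
  (c : G -> Gam) (Hc : cont_hom r s comp gmul c)
  (Heff : effective G0 r s (c @^-1` [set e]))
  (Q : zmodType) (mulQ : Q -> Q -> Q) (Qg : Gam -> set Q)
  (HQ : is_graded_rng gmul mulQ Qg)
  (pi : (G -> F) -> Q)
  (pi_add : forall f g, steinberg f -> steinberg g ->
     pi (fun x => f x + g x) = pi f + pi g)
  (pi_mul : forall f g, steinberg f -> steinberg g ->
     pi (conv r comp inv sigma f g) = mulQ (pi f) (pi g))
  (pi_graded : forall (gam : Gam) (f : G -> F),
     steinberg_hom c gam f -> Qg gam (pi f)) :
  (forall f g, steinberg f -> steinberg g -> pi f = pi g -> f = g) <->
  (forall K : set G, K `<=` G0 -> K !=set0 -> compact K ->
     (exists U : set G, open U /\ K = U `&` G0) ->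
     pi (indic1 F K) != 0).
Proof.
have pi_zero := pi0 pi_add.
split=> [pi_inj K KG0 [k Kk] cK [U [oU KU]] | indic_neq0 f g Sf Sg pifg].
  have oK : open K by rewrite KU; apply: openI => //; exact: open_units HG Hample.
  apply/eqP => piK0; have := pi_inj _ _ (steinberg_indic1 F Hhaus oK cK) (steinberg0 G F).
  move=> /(_ (etrans piK0 (esym pi_zero)))/(congr1 (fun f => f k)).
  by rewrite /= indic1_in // => /eqP; rewrite oner_eq0.
apply/funext => x; apply/eqP; rewrite -subr_eq0; apply/negPn/negP => fgx.
pose h0 x := f x - g x.
have Sh0 : steinberg h0.
  by apply: (steinberg_op2 Hhaus (op := fun a b => a - b)); rewrite ?subrr.
have pih0 : pi h0 = 0.
  have := pi_add _ _ Sh0 Sg; under eq_fun do rewrite subrK.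
  by move=> E; apply: (@addIr _ (pi g)); rewrite add0r -E pifg.
have [h [Sh pih hdeg hx]] :=
  kernel_homogeneous_part Hhaus e Hc HQ pi_add pi_graded Sh0 pih0 fgx.
have [K [KG0 K0 cK oK piK]] := homogeneous_kernel_indic1 HG Hhaus Hample Hsigma HGam Hc
  Heff HQ pi_mul Sh pih hdeg hx.
suff /(indic_neq0 K KG0 K0 cK) : exists U, open U /\ K = U `&` G0 by rewrite piK eqxx.
by exists K; split => //; apply/seteqP; split => [y Ky|y []//]; split => //; apply: KG0.
Qed.
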